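(* Let $\mathcal{R}(z)$ be the stability function of the InDC method constructed with stiffly accurate IRK methods with nonsingular coefficient matrices $A$, using $M$ uniform quadrature points per step excluding the left-most point. Then $\lim_{|z|\to\infty}\mathcal{R}(z)=0$. Consequently, the method is $L$-stable if it is $A$-stable.
   Context: InDC method for an ODE $y'=F(y)$ over one step $[t_n,t_n+H]$: nodes $\tau_m=t_n+mh$, $h=H/M$, $m=0,\dots,M$; $\alpha_j$ ($j=1,\dots,M$) the Lagrange basis polynomials of degree $M-1$ for $\tau_1,\dots,\tau_M$; $S^m(\bar w)=\frac1h\sum_jw_j\int_{\tau_m}^{\tau_{m+1}}\alpha_j$, $S^{c_{mi}}(\bar w)=\frac1h\sum_jw_j\int_{\tau_m}^{\tau_m+c_ih}\alpha_j$, $P^{c_{mi}}(\bar w)=\sum_jw_j\alpha_j(\tau_m+c_ih)$. Prediction: an IRK method (tableau $A,b,c$) applied with step $h$ on each substep from $y_n$, giving $y^{(0)}_m$. Correction $k$: $y^{(k)}_0=y_n$ and $Y_{mi}=y^{(k)}_m+hS^{c_{mi}}(\bar F^{(k-1)})+h\sum_ja_{ij}\Delta K_{mj}$, $y^{(k)}_{m+1}=y^{(k)}_m+hS^m(\bar F^{(k-1)})+h\sum_ib_i\Delta K_{mi}$, $\Delta K_{mi}=F(Y_{mi})-P^{c_{mi}}(\bar F^{(k-1)})$, $\bar F^{(k-1)}=(F(y^{(k-1)}_j))_{j=1}^M$; output $y_{n+1}=y^{(K)}_M$. The stability function $\mathcal{R}$ is defined by $y_{n+1}=\mathcal{R}(z)y_n$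 when the method is applied to $y'=\lambda y$, with $z=\lambda H$ (equivalently up to rescaling $z=\lambda h$). Stiffly accurate: $b^T=e_s^TA$. $L$-stable: $A$-stable with $\mathcal{R}(z)\to0$ as $|z|\to\infty$. *)

From HB Require Import structures.
From mathcomp Require Import all_boot all_order all_algebra.
Set Implicit Arguments.
Unset Strict Implicit.
Unset Printing Implicit Defensive.
Import Order.TTheory GRing.Theory Num.Theory.
Local Open Scope ring_scope.

Section InDC.
Variable C : numClosedFieldType.

Definition prim (p : {poly C}) : {poly C} :=
  \poly_(i < (size p).+1) (if i is i'.+1 then p`_i' / i%:R else 0).
Definition pint (p : {poly C}) (a b : C) : C := (prim p).[b] - (prim p).[a].

(* Normalised time variable: t_n = 0, h = 1, so tau_m = m and H = M.
   alpha_j (j : 'I_M) is the Lagrange basis polynomial of degree M-1 for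
   the nodes tau_1, ..., tau_M, equal to 1 at tau_{j+1} = j+1. *)
Definition lagr (M : nat) (j : 'I_M) : {poly C} :=
  \prod_(k < M | k != j)
     (('X - (k.+1)%:R%:P) * (((j.+1)%:R - (k.+1)%:R)^-1)%:P).

Variables (s : nat) (A : 'M[C]_s.+1) (b c : 'rV[C]_s.+1) (M K : nat).

Section Step.
Variable z : C.            (* z = lambda * H *)
Definition w : C := z / M%:R.   (* = lambda * h, h = H / M *)

Definition stages (r : 'cV[C]_s.+1) : 'cV[C]_s.+1 :=
  invmx (1%:M - w *: A) *m r.

Definition irk_step (y : C) : C :=
  let Y := stages (const_mx y) in y + \sum_(i < s.+1) b 0 i * (w * Y i 0).

Fixpoint predict (m : nat) : C :=
  if m is m'.+1 then irk_step (predict m') else 1.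

(* One correction sweep; [old j] is y^{(k-1)}_j, only j = 1..M is used.
   h S^{c_mi}(Fbar), h S^m(Fbar), h P^{c_mi}(Fbar) with h F(y) = w y. *)
Definition hSc (old : nat -> C) (m : nat) (i : 'I_s.+1) : C :=
  \sum_(j < M) w * old j.+1 * pint (lagr j) m%:R (m%:R + c 0 i).
Definition hS (old : nat -> C) (m : nat) : C :=
  \sum_(j < M) w * old j.+1 * pint (lagr j) m%:R (m.+1)%:R.
Definition hP (old : nat -> C) (m : nat) (i : 'I_s.+1) : C :=
  \sum_(j < M) w * old j.+1 * (lagr j).[m%:R + c 0 i].

(* Stage equations Y_i = y_m + hS^{c_mi} + sum_j a_ij (w Y_j - hP_j),
   i.e. (I - w A) Y = y_m 1 + hSc - A hP;
   y_{m+1} = y_m + hS^m + sum_i b_i (w Y_i - hP_i). *)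
Definition corr_step (old : nat -> C) (m : nat) (ym : C) : C :=
  let rhs := \col_(i < s.+1) (ym + hSc old m i) - A *m \col_(i < s.+1) hP old m i in
  let Y := stages rhs in
  ym + hS old m + \sum_(i < s.+1) b 0 i * (w * Y i 0 - hP old m i).

Fixpoint correct (old : nat -> C) (m : nat) : C :=
  if m is m'.+1 then corr_step old m' (correct old m') else 1.

Fixpoint sweep (k : nat) : nat -> C :=
  if k is k'.+1 then correct (sweep k') else predict.

End Step.

(* Stability function: y_{n+1} = R(z) y_n, computed with y_n = 1,
   after K correction sweeps. *)
Definition stabfun (z : C) : C := sweep z K M.

End InDC.

Definition lim_infty_zero (C : numClosedFieldType) (R : C -> C) : Prop :=
  forall e : C, 0 < e -> exists B : C, 0 < B /\ forall z : C, B <= `|z| -> `|R z| < e.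

Definition Astable (C : numClosedFieldType) (R : C -> C) : Prop :=
  forall z : C, 'Re z <= 0 -> `|R z| <= 1.

Definition Lstable (C : numClosedFieldType) (R : C -> C) : Prop :=
  Astable R /\ lim_infty_zero R.

(* Since the IRK method is stiffly accurate, every new value y_{m+1}, in the
   prediction and in each correction sweep, equals the last stage value Y_{m,s}.
   The stages solve (I - wA) Y = r with w = lambda h; as A is invertible,
   |w| |Y| <= 2 |A^-1| |r| once |w| >= 2 |A^-1|, so Y = O(1/z) whenever r stays
   bounded.  The right-hand side r involves y_m and the previous sweep only through
   w y^{(k-1)}_j, so it stays bounded if y_m is bounded and the previous sweep is
   O(1/z).  Induction over substeps and sweeps makes every y^{(k)}_m with m >= 1,
   in particular R(z) = y^{(K)}_M, an O(1/z). *)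
From HB Require Import structures.
From mathcomp Require Import all_boot all_order all_algebra ring.
Import Order.TTheory GRing.Theory Num.Theory.
Local Open Scope ring_scope.
Set Implicit Arguments.
Unset Strict Implicit.
Unset Printing Implicit Defensive.

Section AtInfinity.
Variable C : numClosedFieldType.

(* [C] is only partially ordered, so thresholds are combined by addition rather
   than [max]; requiring [L >= 1] keeps them nonnegative. *)
Definition near_infty (P : C -> Prop) : Prop :=
  exists L : C, 1 <= L /\ forall z, L <= `|z| -> P z.

Definition bounded_at_infty (f : C -> C) : Prop :=
  exists K : C, near_infty (fun z => `|f z| <= K).

Definition decays_at_infty (f : C -> C) : Prop :=
  bounded_at_infty (fun z => z * f z).

Lemma near_inftyT (P : C -> Prop) : (forall z, P z) -> near_infty P.
Proof. by move=> HP; exists 1. Qed.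

Lemma near_infty_mono (P Q : C -> Prop) :
  (forall z, P z -> Q z) -> near_infty P -> near_infty Q.
Proof. by move=> PQ [L [L1 HP]]; exists L; split=> // z /HP /PQ. Qed.

Lemma near_infty_and (P Q : C -> Prop) :
  near_infty P -> near_infty Q -> near_infty (fun z => P z /\ Q z).
Proof.
move=> [L1 [L1_ge1 HP]] [L2 [L2_ge1 HQ]].
have [L1_ge0 L2_ge0] := (le_trans ler01 L1_ge1, le_trans ler01 L2_ge1).
exists (L1 + L2); split; first by rewrite -[1]addr0 lerD.
move=> z hz; split; [apply: HP | apply: HQ]; apply: le_trans hz.
  by rewrite lerDl.
by rewrite lerDr.
Qed.

Lemma near_infty_norm_ge (B : C) : 0 <= B -> near_infty (fun z => B <= `|z|).
Proof.
move=> B_ge0; exists (B + 1); split=> [|z]; first by rewrite lerDr.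
by apply: le_trans; rewrite lerDl.
Qed.

Lemma near_eq_bounded_at_infty (f g : C -> C) :
  near_infty (fun z => f z = g z) -> bounded_at_infty f -> bounded_at_infty g.
Proof.
move=> efg [K HK]; exists K.
by apply: near_infty_mono (near_infty_and efg HK) => z [<-].
Qed.

Lemma eq_bounded_at_infty (f g : C -> C) :
  f =1 g -> bounded_at_infty f -> bounded_at_infty g.
Proof. by move=> efg; apply/near_eq_bounded_at_infty/near_inftyT. Qed.

Lemma near_eq_decays_at_infty (f g : C -> C) :
  near_infty (fun z => f z = g z) -> decays_at_infty f -> decays_at_infty g.
Proof.
move=> efg; apply: near_eq_bounded_at_infty.
by apply: near_infty_mono efg => z ->.
Qed.

Lemma bounded_at_infty_cst (a : C) : bounded_at_infty (fun=> a).
Proof. by exists `|a|; apply: near_inftyT. Qed.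

Lemma bounded_at_inftyD (f g : C -> C) :
  bounded_at_infty f -> bounded_at_infty g ->
  bounded_at_infty (fun z => f z + g z).
Proof.
move=> [Kf Hf] [Kg Hg]; exists (Kf + Kg).
apply: near_infty_mono (near_infty_and Hf Hg) => z [hf hg].
exact: le_trans (ler_normD _ _) (lerD hf hg).
Qed.

Lemma bounded_at_inftyB (f g : C -> C) :
  bounded_at_infty f -> bounded_at_infty g ->
  bounded_at_infty (fun z => f z - g z).
Proof.
move=> hf [Kg Hg]; apply: bounded_at_inftyD hf _; exists Kg.
by apply: near_infty_mono Hg => z; rewrite normrN.
Qed.

Lemma bounded_at_inftyM (f g : C -> C) :
  bounded_at_infty f -> bounded_at_infty g ->
  bounded_at_infty (fun z => f z * g z).
Proof.
move=> [Kf Hf] [Kg Hg]; exists (Kf * Kg).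
apply: near_infty_mono (near_infty_and Hf Hg) => z [hf hg].
by rewrite normrM ler_pM.
Qed.

Lemma bounded_at_infty_norm (f : C -> C) :
  bounded_at_infty f -> bounded_at_infty (fun z => `|f z|).
Proof. by move=> [K HK]; exists K; apply: near_infty_mono HK => z; rewrite normr_id. Qed.

Lemma bounded_at_infty_sum (I : Type) (r : seq I) (P : pred I) (F : I -> C -> C) :
  (forall i, bounded_at_infty (F i)) ->
  bounded_at_infty (fun z => \sum_(i <- r | P i) F i z).
Proof.
move=> hF; elim: r => [|x r IH].
  by apply: eq_bounded_at_infty (bounded_at_infty_cst 0) => z; rewrite big_nil.
apply: (@eq_bounded_at_infty
          (fun z => (if P x then F x z else 0) + \sum_(i <- r | P i) F i z)).
  by move=> z; rewrite big_cons; case: (P x); rewrite ?add0r.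
by apply: bounded_at_inftyD IH; case: (P x); [apply: hF | apply: bounded_at_infty_cst].
Qed.

Lemma decays_bounded_at_infty (f : C -> C) :
  decays_at_infty f -> bounded_at_infty f.
Proof.
move=> [K [L [L_ge1 HK]]]; exists K, L; split=> // z hz.
apply: le_trans (HK z hz); rewrite normrM ler_peMl //.
exact: le_trans hz.
Qed.

Lemma decays_lim_infty_zero (f : C -> C) : decays_at_infty f -> lim_infty_zero f.
Proof.
move=> [K [L [L_ge1 HK]]] e e_gt0.
have L_gt0 : 0 < L := lt_le_trans ltr01 L_ge1.
have Ke_ge0 : 0 <= `|K| / e by rewrite divr_ge0 // ltW.
exists (L + `|K| / e); split; first exact: ltr_wpDr.
move=> z hz.
have hzL : L <= `|z| by apply: le_trans hz; rewrite lerDl.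
have z_gt0 : 0 < `|z| := lt_le_trans L_gt0 hzL.
have K_ge0 : 0 <= K := le_trans (normr_ge0 _) (HK z hzL).
rewrite -(ltr_pM2l z_gt0) -normrM.
apply: le_lt_trans (HK z hzL) _; rewrite -(ger0_norm K_ge0).
rewrite -ltr_pdivrMr //; apply: lt_le_trans hz.
exact: ltr_pwDl.
Qed.

End AtInfinity.

Section ResolventBound.
Variables (C : numClosedFieldType) (n : nat).

Definition col_norm1 (x : 'cV[C]_n) : C := \sum_i `|x i 0|.

(* Bounds the operator norm induced by [col_norm1]. *)
Definition mx_abs_sum (B : 'M[C]_n) : C := \sum_i \sum_j `|B i j|.

Lemma col_norm1_ge0 (x : 'cV[C]_n) : 0 <= col_norm1 x.
Proof. exact: sumr_ge0. Qed.

Lemma mx_abs_sum_ge0 (B : 'M[C]_n) : 0 <= mx_abs_sum B.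
Proof. by apply: sumr_ge0 => i _; apply: sumr_ge0. Qed.

Lemma ler_col_norm1 (x : 'cV[C]_n) i : `|x i 0| <= col_norm1 x.
Proof. by rewrite /col_norm1 (bigD1 i) //= lerDl sumr_ge0. Qed.

Lemma col_norm1_eq0 (x : 'cV[C]_n) : col_norm1 x = 0 -> x = 0.
Proof.
move=> x0; apply/matrixP => i j; rewrite (ord1 j) mxE.
by apply/normr0_eq0; apply: (psumr_eq0P _ x0).
Qed.

Lemma col_norm10 : col_norm1 0 = 0.
Proof. by rewrite /col_norm1 big1 // => i _; rewrite mxE normr0. Qed.

Lemma col_norm1Z a (x : 'cV[C]_n) : col_norm1 (a *: x) = `|a| * col_norm1 x.
Proof. by rewrite /col_norm1 mulr_sumr; apply: eq_bigr => i _; rewrite mxE normrM. Qed.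

Lemma col_norm1B (x y : 'cV[C]_n) : col_norm1 (x - y) <= col_norm1 x + col_norm1 y.
Proof.
rewrite /col_norm1 -big_split; apply: ler_sum => i _; rewrite !mxE.
by rewrite -(normrN (y i 0)) ler_normD.
Qed.

Lemma col_norm1_mulmx (B : 'M[C]_n) (x : 'cV[C]_n) :
  col_norm1 (B *m x) <= mx_abs_sum B * col_norm1 x.
Proof.
rewrite /col_norm1 /mx_abs_sum mulr_suml; apply: ler_sum => i _; rewrite mxE.
apply: le_trans (ler_norm_sum _ _ _) _; rewrite mulr_suml.
by apply: ler_sum => j _; rewrite normrM ler_wpM2l ?ler_col_norm1.
Qed.

Variable A : 'M[C]_n.
Hypothesis A_unit : A \in unitmx.

(* (I - wA) Y = r rewrites as w Y = A^-1 (Y - r). *)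
Lemma resolvent_norm_le w (Y r : 'cV[C]_n) : (1%:M - w *: A) *m Y = r ->
  `|w| * col_norm1 Y <= mx_abs_sum (invmx A) * (col_norm1 Y + col_norm1 r).
Proof.
move=> hY.
have AwY : w *: (A *m Y) = Y - r.
  by rewrite -hY mulmxBl mul1mx scalemxAl opprB addrC subrK.
have wY : w *: Y = invmx A *m (Y - r) by rewrite -AwY scalemxAr mulKmx.
rewrite -col_norm1Z wY; apply: le_trans (col_norm1_mulmx _ _) _.
by rewrite ler_wpM2l ?mx_abs_sum_ge0 ?col_norm1B.
Qed.

Lemma resolvent_unitmx w : mx_abs_sum (invmx A) < `|w| -> 1%:M - w *: A \in unitmx.
Proof.
move=> hw; rewrite unitmxE unitfE -det_tr; apply/negP => /det0P [v v_neq0 hv].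
have hvT : (1%:M - w *: A) *m v^T = 0 by rewrite -[_ *m _]trmxK trmx_mul trmxK hv trmx0.
have := resolvent_norm_le hvT; rewrite col_norm10 addr0 => hle.
have vT0 : col_norm1 v^T = 0.
  apply/eqP; apply: contraTT hw => y_neq0.
  have y_gt0 : 0 < col_norm1 v^T by rewrite lt_def y_neq0 col_norm1_ge0.
  by apply/negbT/le_gtF; rewrite -(ler_pM2r y_gt0).
by move/eqP: v_neq0; apply; rewrite -[v]trmxK (col_norm1_eq0 vT0) trmx0.
Qed.

Lemma resolvent_solution_bound w (Y r : 'cV[C]_n) :
  mx_abs_sum (invmx A) + mx_abs_sum (invmx A) <= `|w| ->
  (1%:M - w *: A) *m Y = r ->
  `|w| * col_norm1 Y <= (mx_abs_sum (invmx A) + mx_abs_sum (invmx A)) * col_norm1 r.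
Proof.
set N := mx_abs_sum _ => hw hY; have key := resolvent_norm_le hY.
rewrite -(lerD2l (`|w| * col_norm1 Y)); apply: le_trans (lerD key key) _.
have -> : N * (col_norm1 Y + col_norm1 r) + N * (col_norm1 Y + col_norm1 r)
          = (N + N) * col_norm1 Y + (N + N) * col_norm1 r by ring.
by rewrite lerD2r ler_wpM2r ?col_norm1_ge0.
Qed.

End ResolventBound.

Section InDCDecay.
Variables (C : numClosedFieldType) (s : nat) (A : 'M[C]_s.+1) (b c : 'rV[C]_s.+1).
Variable M : nat.
Hypotheses (M_gt0 : (0 < M)%N) (A_unit : A \in unitmx).
Hypothesis c_row_sum : forall i, c 0 i = \sum_(j < s.+1) A i j.
Hypothesis b_sum1 : \sum_(j < s.+1) b 0 j = 1.
Hypothesis stiffly_accurate : forall j, b 0 j = A ord_max j.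

Lemma stages_last z r : 1%:M - w M z *: A \in unitmx ->
  stages A M z r ord_max 0 =
  r ord_max 0 + \sum_k b 0 k * (w M z * stages A M z r k 0).
Proof.
move=> B_unit; set Y := stages A M z r.
have solY : (1%:M - w M z *: A) *m Y = r by rewrite mulKVmx.
have hY : Y = r + w M z *: (A *m Y).
  by rewrite -solY mulmxBl mul1mx scalemxAl subrK.
rewrite {1}hY !mxE mulr_sumr; congr (_ + _); apply: eq_bigr => k _.
by rewrite stiffly_accurate mulrCA.
Qed.

Lemma c_last : c 0 ord_max = 1.
Proof. by rewrite c_row_sum -b_sum1; apply: eq_bigr => j _; rewrite stiffly_accurate. Qed.

Lemma irk_step_last_stage z y : 1%:M - w M z *: A \in unitmx ->
  irk_step A b M z y = stages A M z (const_mx y) ord_max 0.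
Proof. by move=> B_unit; rewrite stages_last // mxE. Qed.

Lemma corr_step_last_stage z old m ym : 1%:M - w M z *: A \in unitmx ->
  corr_step A b c M z old m ym =
  stages A M z (\col_i (ym + hSc c M z old m i) - A *m \col_i hP c M z old m i)
    ord_max 0.
Proof.
move=> B_unit; rewrite stages_last // /corr_step /= !mxE.
have -> : hSc c M z old m ord_max = hS M z old m.
  by rewrite /hSc /hS c_last; apply: eq_bigr => j _; rewrite -natr1.
have -> : \sum_j A ord_max j * (\col_i hP c M z old m i) j 0 =
          \sum_j b 0 j * hP c M z old m j.
  by apply: eq_bigr => j _; rewrite mxE stiffly_accurate.
rewrite -!addrA; congr (_ + (_ + _)).
by rewrite -sumrN -big_split /=; apply: eq_bigr => j _; ring.
Qed.

Lemma normr_w (z : C) : `|z| = M%:R * `|w M z|.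
Proof.
have M_neq0 : M%:R != 0 :> C by rewrite pnatr_eq0 -lt0n.
by rewrite /w normrM normfV normr_nat mulrCA mulfV // mulr1.
Qed.

Lemma near_infty_w_ge (B : C) : 0 <= B -> near_infty (fun z => B <= `|w M z|).
Proof.
move=> B_ge0; have MB_ge0 : 0 <= M%:R * B by rewrite mulr_ge0.
apply: near_infty_mono (near_infty_norm_ge MB_ge0) => z.
by rewrite normr_w ler_pM2l ?ltr0n.
Qed.

Lemma near_infty_resolvent_unitmx :
  near_infty (fun z => 1%:M - w M z *: A \in unitmx).
Proof.
have N1_ge0 : 0 <= mx_abs_sum (invmx A) + 1 by rewrite addr_ge0 ?mx_abs_sum_ge0.
apply: near_infty_mono (near_infty_w_ge N1_ge0) => z hw.
by apply: resolvent_unitmx => //; apply: lt_le_trans hw; rewrite ltrDl.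
Qed.

Lemma stages_decay (r : C -> 'cV[C]_s.+1) :
  (forall i, bounded_at_infty (fun z => r z i 0)) ->
  forall i, decays_at_infty (fun z => stages A M z (r z) i 0).
Proof.
move=> hr i; set N := mx_abs_sum (invmx A).
have [Kr HKr] : bounded_at_infty (fun z => col_norm1 (r z)).
  by apply: bounded_at_infty_sum => j; apply: bounded_at_infty_norm.
have NN_ge0 : 0 <= N + N by rewrite addr_ge0 ?mx_abs_sum_ge0.
exists (M%:R * ((N + N) * Kr)).
apply: near_infty_mono (near_infty_and HKr (near_infty_and
         (near_infty_w_ge NN_ge0) near_infty_resolvent_unitmx)) => z [hr_le [hw B_unit]].
have hY : (1%:M - w M z *: A) *m stages A M z (r z) = r z by rewrite mulKVmx.
rewrite normrM normr_w -mulrA ler_pM2l ?ltr0n //.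
apply: le_trans (ler_wpM2l (normr_ge0 _) (ler_col_norm1 _ i)) _.
apply: le_trans (resolvent_solution_bound A_unit hw hY) _.
by rewrite ler_wpM2l // -[col_norm1 _]ger0_norm ?col_norm1_ge0.
Qed.

Lemma bounded_w_mul (f : C -> C) :
  decays_at_infty f -> bounded_at_infty (fun z => w M z * f z).
Proof.
move=> hf; apply: eq_bounded_at_infty (bounded_at_inftyM hf (bounded_at_infty_cst M%:R^-1)) => z.
by rewrite /w mulrAC.
Qed.

Lemma irk_step_decay (y : C -> C) :
  bounded_at_infty y -> decays_at_infty (fun z => irk_step A b M z (y z)).
Proof.
move=> hy; have hr i : bounded_at_infty (fun z => (const_mx (y z) : 'cV[C]_s.+1) i 0).
  by apply: eq_bounded_at_infty hy => z; rewrite mxE.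
apply: near_eq_decays_at_infty (stages_decay hr ord_max).
by apply: near_infty_mono near_infty_resolvent_unitmx => z /irk_step_last_stage ->.
Qed.

Lemma corr_step_decay (old : C -> nat -> C) (y : C -> C) m :
  (forall j, decays_at_infty (fun z => old z j.+1)) -> bounded_at_infty y ->
  decays_at_infty (fun z => corr_step A b c M z (old z) m (y z)).
Proof.
move=> hold hy.
have hSc_bounded i : bounded_at_infty (fun z => hSc c M z (old z) m i).
  apply: bounded_at_infty_sum => j; apply: bounded_at_inftyM (bounded_at_infty_cst _).
  exact: bounded_w_mul.
have hP_bounded i : bounded_at_infty (fun z => hP c M z (old z) m i).
  apply: bounded_at_infty_sum => j; apply: bounded_at_inftyM (bounded_at_infty_cst _).
  exact: bounded_w_mul.
pose r z := \col_i (y z + hSc c M z (old z) m i) - A *m \col_i hP c M z (old z) m i.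
have hr i : bounded_at_infty (fun z => r z i 0).
  apply: (@eq_bounded_at_infty _
     (fun z => y z + hSc c M z (old z) m i - \sum_k A i k * hP c M z (old z) m k)).
    by move=> z; rewrite !mxE; congr (_ - _); apply: eq_bigr => k _; rewrite mxE.
  apply: bounded_at_inftyB; first exact: bounded_at_inftyD.
  by apply: bounded_at_infty_sum => k; apply: bounded_at_inftyM (bounded_at_infty_cst _) _.
apply: near_eq_decays_at_infty (stages_decay hr ord_max).
by apply: near_infty_mono near_infty_resolvent_unitmx => z /corr_step_last_stage ->.
Qed.

Lemma predict_decay m : decays_at_infty (fun z => predict A b M z m.+1).
Proof.
elim: m => [|m IH]; apply: irk_step_decay.
  exact: bounded_at_infty_cst.
exact: decays_bounded_at_infty.
Qed.

Lemma correct_decay (old : C -> nat -> C) :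
  (forall j, decays_at_infty (fun z => old z j.+1)) ->
  forall m, decays_at_infty (fun z => correct A b c M z (old z) m.+1).
Proof.
move=> hold; elim=> [|m IH]; apply: corr_step_decay => //.
  exact: bounded_at_infty_cst.
exact: decays_bounded_at_infty.
Qed.

Lemma sweep_decay k m : (0 < m)%N -> decays_at_infty (fun z => sweep A b c M z k m).
Proof.
elim: k m => [|k IH] [|m] // _; first exact: predict_decay.
by apply: correct_decay => j; apply: IH.
Qed.

End InDCDecay.

Unset Implicit Arguments.
Set Strict Implicit.

Theorem proposition5p1 (C : numClosedFieldType) (s : nat)
  (A : 'M[C]_s.+1) (b c : 'rV[C]_s.+1) (M K : nat) :
  (0 < M)%N ->
  (forall i j, A i j \is Num.real) ->
  (forall j, b 0 j \is Num.real) ->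
  (forall i, c 0 i \is Num.real) ->
  (forall i, c 0 i = \sum_(j < s.+1) A i j) ->
  \sum_(j < s.+1) b 0 j = 1 ->
  A \in unitmx ->
  (forall j, b 0 j = A ord_max j) ->
  lim_infty_zero (stabfun A b c M K) /\
  (Astable (stabfun A b c M K) -> Lstable (stabfun A b c M K)).
Proof.
move=> M_gt0 _ _ _ c_row_sum b_sum1 A_unit stiffly_accurate.
have lim0 : lim_infty_zero (stabfun A b c M K).
  apply: decays_lim_infty_zero.
  exact: (sweep_decay M_gt0 A_unit c_row_sum b_sum1 stiffly_accurate K M_gt0).
by split=> // Astab; split.
Qed.
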